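(* For each $N\ge2$ let $(\nu_r^{(1:N)})_{r\ge1}$ be random vectors of non-negative integers with $\sum_i\nu_r^{(i)}=N$, and assume that for all real $0 \le s < u$, $$\lim_{N\to\infty}\mathbb{E}\Bigg[\sum_{r=\tau_N(s)+1}^{\tau_N(u)} c_N(r)^2\Bigg] = 0.$$ Fix $k\in\mathbb{N}$, times $0=t_0\le t_1\le\cdots\le t_k\le t$, and strictly positive constants $K_1,\dots,K_k$. Define $$E_N := \bigcap_{j=1}^k\Bigg\{\sum_{s=\tau_N(t_{j-1})+1}^{\tau_N(t_j)} c_N(s)^2 \le K_j\Bigg\}.$$ Then $\lim_{N\to\infty}\mathbb{P}[E_N]=1$.
   Context: $(x)_k$ is the falling factorial; $c_N(r) := \frac{1}{(N)_2}\sum_i(\nu_r^{(i)})_2$; $\tau_N(u) := \inf\{s\in\{0,1,2,\dots\}: \sum_{r=1}^s c_N(r)\ge u\}$ (so $\tau_N(0)=0$); sums with upper limit below lower limit are $0$. *)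

From HB Require Import structures.
From mathcomp Require Import all_boot all_order all_algebra.
From mathcomp Require Import all_classical all_reals all_analysis.
Set Implicit Arguments. Unset Strict Implicit. Unset Printing Implicit Defensive.
Import Order.TTheory GRing.Theory Num.Theory.
Local Open Scope ring_scope.

Definition cN {R : realType} (N : nat) (nu : 'I_N -> nat) : R :=
  (\sum_(i < N) ((nu i) ^_ 2)%:R) / ((N ^_ 2)%:R).

Definition psum {R : realType} (c : nat -> R) (s : nat) : R :=
  \sum_(1 <= r < s.+1) c r.

(* tau(u) = inf { s in N : psum c s >= u }, None encodes +infinity (inf of empty set) *)
Definition tau {R : realType} (c : nat -> R) (u : R) : option nat :=
  match pselect (exists s, u <= psum c s) with
  | left h => Some (@ex_minn (fun s => u <= psum c s) h)
  | right _ => None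
  end.

Definition in_range (a b : option nat) (r : nat) : bool :=
  (if a is Some ta then (ta < r)%N else false) && (if b is Some tb then (r <= tb)%N else true).

Definition sqsum {R : realType} (c : nat -> R) (a b : R) : \bar R :=
  (\sum_(1 <= r <oo | in_range (tau c a) (tau c b) r) ((c r) ^+ 2)%:E)%E.

From HB Require Import structures.
From mathcomp Require Import all_boot all_order all_algebra.
From mathcomp Require Import all_classical all_reals all_analysis.
From mathcomp Require Import measurable_realfun.
Import Order.TTheory GRing.Theory Num.Theory.
Local Open Scope classical_set_scope.
Local Open Scope ring_scope.

(* By Markov's inequality P[S_j > K_j] <= E[S_j] / K_j, where S_j is the sum of
   squares over the j-th random time window; E[S_j] -> 0 by hypothesis (S_j = 0
   when t_{j-1} = t_j), and a union bound over the k windows gives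
   P[E_N^c] -> 0.  The only technical point is that S_j is measurable: the event
   {tau_N(u) = m} is decided by the countably many measurable partial sums, so
   every indicator of r lying in the window is measurable. *)

Section countable_range.
Context {d d'} {T : measurableType d} {Y : measurableType d'}.

Lemma measurable_fun_countable_comp {C : countType} (h : T -> C) (g : C -> Y) :
  (forall x, measurable [set w | h w = x]) -> measurable_fun setT (g \o h).
Proof.
move=> mh _ A mA; rewrite setTI.
have -> : (g \o h) @^-1` A =
    \bigcup_n [set w | exists2 x, unpickle n = Some x /\ A (g x) & h w = x].
  apply/seteqP; split => w /=.
    by move=> Aw; exists (pickle (h w)) => //; exists (h w); rewrite ?pickleK.
  by move=> [n _ [x [_ Ax] hx]]; rewrite /= hx.
apply: bigcup_measurable => n _.
case: (unpickle n) => [x|]; last first.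
  by rewrite (_ : [set _ | _] = set0) //; apply/seteqP; split => w // - [x []].
have [Ax|nAx] := pselect (A (g x)).
  rewrite (_ : [set _ | _] = [set w | h w = x]) //; apply/seteqP; split => w /=.
    by move=> [y [[->] _] ->].
  by move=> hw; exists x.
by rewrite (_ : [set _ | _] = set0) //; apply/seteqP; split => w // [y [[<-]]].
Qed.

Lemma measurable_natr_fiber (R : realType) (h : T -> nat) :
  measurable_fun setT (fun w => (h w)%:R : R) -> forall n, measurable [set w | h w = n].
Proof.
move=> mh n; have := mh measurableT [set (n%:R : R)] (measurable_set1 _).
rewrite setTI; congr measurable; apply/seteqP; split => w /=.
  by move/eqP; rewrite eqr_nat => /eqP.
by move=> ->.
Qed.

End countable_range.

Section tau_sqsum.
Context {R : realType} (c : nat -> R).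

Lemma tau_SomeP a m :
  tau c a = Some m <-> a <= psum c m /\ forall s, (s < m)%N -> psum c s < a.
Proof.
rewrite /tau; case: pselect => [h|h]; last first.
  by split=> // -[am _]; case: h; exists m.
case: ex_minnP => n an nmin; split.
  by move=> [<-]; split=> // s; apply: contraTT; rewrite -leNgt -leqNgt; apply: nmin.
move=> [am mmin]; congr Some; apply/eqP; rewrite eqn_leq nmin //=.
by rewrite leqNgt; apply: contraTN an => /mmin; rewrite -ltNge.
Qed.

Lemma tau_NoneP a : tau c a = None <-> forall s, psum c s < a.
Proof.
rewrite /tau; case: pselect => [[s as_] | h]; split => //.
  by move=> /(_ s); rewrite ltNge as_.
by move=> _ s; rewrite ltNge; apply/negP => as_; apply: h; exists s.
Qed.

Lemma sqsum_ge0 a b : (0 <= sqsum c a b)%E.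
Proof. by apply: nneseries_ge0 => r _ _; rewrite lee_fin sqr_ge0. Qed.

Lemma sqsumxx a : sqsum c a a = 0%E.
Proof.
apply: eseries0 => r _; rewrite /in_range.
by case: (tau c a) => // m; case: ltnP.
Qed.

End tau_sqsum.

Section measurable_sqsum.
Context d (T : measurableType d) (R : realType) (N : nat) (nu : nat -> 'I_N -> T -> nat).
Hypothesis mnu : forall r i, measurable_fun setT (fun w => (nu r i w)%:R : R).

Let c (w : T) : nat -> R := fun r => cN (fun i => nu r i w).

Lemma measurable_cN r : measurable_fun setT (fun w => c w r).
Proof.
apply: measurable_funM => //; apply: measurable_sum => i.
apply: (measurable_fun_countable_comp (nu r i) (fun n => (n ^_ 2)%:R : R)).
exact: measurable_natr_fiber.
Qed.

Lemma measurable_tau_eq a (o : option nat) : measurable [set w | tau (c w) a = o].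
Proof.
have mpsum s : measurable_fun setT (fun w => psum (c w) s).
  by apply: measurable_sum => r; exact: measurable_cN.
have mlt s : measurable [set w | psum (c w) s < a].
  rewrite (_ : [set _ | _] = ~` [set w | a <= psum (c w) s]).
    by apply/measurableC; rewrite -[X in measurable X]setTI; exact: measurable_fun_le.
  by apply/seteqP; split => w /=; rewrite ltNge => /negP.
case: o => [m|].
  rewrite (_ : [set _ | _] = [set w | a <= psum (c w) m] `&`
      \bigcap_(s in [set s | (s < m)%N]) [set w | psum (c w) s < a]).
    apply: measurableI; last by apply: bigcap_measurableType => s _.
    by rewrite -[X in measurable X]setTI; apply: measurable_fun_le.
  by apply/seteqP; split => w /tau_SomeP.
rewrite (_ : [set _ | _] = \bigcap_(s in setT) [set w | psum (c w) s < a]).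
  by apply: bigcap_measurableType.
apply/seteqP; split => w /= => [/tau_NoneP h s _ | h]; first exact: h.
by apply/tau_NoneP => s; exact: h.
Qed.

Lemma measurable_sqsum a b : measurable_fun setT (fun w => sqsum (c w) a b).
Proof.
rewrite /sqsum; under eq_fun do rewrite eseries_mkcond eseries_cond.
apply: (ge0_emeasurable_sum (P := fun r => (1 <= r)%N)) => [r w _ _ | r _].
  by case: ifP => // _; rewrite lee_fin sqr_ge0.
apply: measurable_fun_ifT; last 2 first.
- by apply/measurable_EFinP/measurable_funX; exact: measurable_cN.
- exact: measurable_cst.
apply: (measurable_fun_countable_comp (fun w => (tau (c w) a, tau (c w) b))
  (fun p => in_range p.1 p.2 r)).
move=> [oa ob]; rewrite (_ : [set _ | _] =
    [set w | tau (c w) a = oa] `&` [set w | tau (c w) b = ob]).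
  by apply: measurableI; exact: measurable_tau_eq.
by apply/seteqP; split => w /= => [[-> ->] | [-> ->]].
Qed.

End measurable_sqsum.

Section vanishing_events.
Context d (T : nat -> measurableType d) (R : realType).
Local Open Scope ereal_scope.

Lemma markov_cvg0 (mu : forall N, {measure set (T N) -> \bar R})
    (X : forall N, T N -> \bar R) (a : R) :
  (0 < a)%R -> (forall N w, 0 <= X N w) ->
  (\forall N \near \oo, measurable_fun setT (X N)) ->
  (fun N => \int[mu N]_w X N w) @ \oo --> 0 ->
  (fun N => mu N [set w | a%:E < X N w]) @ \oo --> 0.
Proof.
move=> a0 X0 mX EX0.
apply: (@squeeze_cvge _ _ _ _ (cst 0) _ (fun N => a^-1%:E * \int[mu N]_w X N w)).
- near=> N; have mXN : measurable_fun setT (X N) by near: N.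
  rewrite measure_ge0 /= lee_pdivlMl //.
  have := le_integral_comp_abse (mu N) measurableT (measurable_id (D := setT))
    (fun r h => h) (fun x y _ _ h => h) mXN a0.
  under eq_integral do rewrite gee0_abs //.
  apply: le_trans; apply: lee_wpmul2l; first by rewrite lee_fin ltW.
  apply: le_measure; rewrite ?inE.
  + by rewrite -[X in measurable X]setTI; exact: emeasurable_fun_o_infty.
  + apply: emeasurable_fun_c_infty => //; exact: measurableT_comp mXN.
  + by move=> w /= /ltW aX; rewrite gee0_abs.
- exact: cvg_cst.
- by rewrite -(mule0 a^-1%:E); apply: cvgeZl.
Unshelve. all: end_near.
Qed.

Lemma union_bound_cvg0 (mu : forall N, {measure set (T N) -> \bar R})
    (A : forall N, nat -> set (T N)) k :
  (\forall N \near \oo, forall j, (j < k)%N -> measurable (A N j)) ->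
  (forall j, (j < k)%N -> (fun N => mu N (A N j)) @ \oo --> 0) ->
  (fun N => mu N (\bigcup_(j < k) A N j)) @ \oo --> 0.
Proof.
move=> mA A0.
apply: (@squeeze_cvge _ _ _ _ (cst 0) _ (fun N => \sum_(j < k) mu N (A N j))).
- near=> N; rewrite measure_ge0 bigcup_mkord /=.
  by apply: Boole_inequality; near: N.
- exact: cvg_cst.
- rewrite [X in _ --> X](_ : _ = \sum_(j < k) (0 : \bar R)); last by rewrite big1_eq.
  apply: cvg_nnesum => j _; last exact: A0.
  by near=> N; exact: measure_ge0.
Unshelve. all: end_near.
Qed.

Lemma probability_bigcap_cvg1 (P : forall N, probability (T N) R)
    (A : forall N, nat -> set (T N)) k :
  (\forall N \near \oo, forall j, (j < k)%N -> measurable (A N j)) ->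
  (forall j, (j < k)%N -> (fun N => P N (~` A N j)) @ \oo --> 0) ->
  (fun N => P N (\bigcap_(j < k) A N j)) @ \oo --> 1.
Proof.
move=> mA cA0.
have PE : \forall N \near \oo,
    1 - P N (\bigcup_(j < k) ~` A N j) = P N (\bigcap_(j < k) A N j).
  near=> N; rewrite -setC_bigcap -probability_setC ?setCK //.
  by apply/measurableC/bigcap_measurableType; near: N.
rewrite -[X in _ --> X]sube0; apply: cvg_trans (near_eq_cvg PE) _.
apply: cvgeB => //; first exact: cvg_cst.
apply: union_bound_cvg0 => //.
by near=> N => j jk; apply: measurableC; move: j jk; near: N.
Unshelve. all: end_near.
Qed.

End vanishing_events.

Theorem lemma15 (R : realType) (d : measure_display)
  (T : nat -> measurableType d) (P : forall N, probability (T N) R)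
  (nu : forall N : nat, nat -> 'I_N -> T N -> nat)
  (nu_meas : forall N r (i : 'I_N), (2 <= N)%N ->
      measurable_fun setT (fun w => ((nu N r i w)%:R : R)))
  (nu_sum : forall N r w, (2 <= N)%N -> (1 <= r)%N ->
      (\sum_(i < N) nu N r i w)%N = N)
  (Hlim : forall s u : R, 0 <= s -> s < u ->
      ((fun N => (\int[P N]_w sqsum (fun r => cN (fun i => nu N r i w)) s u)%E)
         @ \oo --> 0%E))
  (k : nat) (t : nat -> R) (tt : R)
  (t0 : t 0%N = 0)
  (t_mono : forall j, (j < k)%N -> t j <= t j.+1)
  (t_le : t k <= tt)
  (K : nat -> R) (K_pos : forall j, (1 <= j <= k)%N -> 0 < K j) :
  (fun N => P N [set w | forall j, (1 <= j <= k)%N ->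
      (sqsum (fun r => cN (fun i => nu N r i w)) (t j.-1) (t j) <= (K j)%:E)%E])
    @ \oo --> 1%E.
Proof.
pose S N j w := sqsum (fun r => cN (fun i => nu N r i w)) (t j.-1) (t j).
have mS : \forall N \near \oo, forall j, measurable_fun setT (S N j).
  near=> N => j; apply: measurable_sqsum => r i; apply: nu_meas.
  by near: N; exact: nbhs_infty_ge.
have t_ge0 j : (j <= k)%N -> 0 <= t j.
  elim: j => [|j IHj] jk; first by rewrite t0.
  exact: le_trans (IHj (ltnW jk)) (t_mono j jk).
have ES j : (j < k)%N -> (fun N => (\int[P N]_w S N j.+1 w)%E) @ \oo --> 0%E.
  move=> jk; have := t_mono j jk; rewrite le_eqVlt => /predU1P[tE|tlt].
    rewrite (_ : (fun N => _) = cst 0%E); first exact: cvg_cst.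
    apply/funext => N; rewrite -(integral0 (P N) setT).
    by apply: eq_integral => w _; rewrite /S /= tE sqsumxx.
  exact: Hlim (t_ge0 j (ltnW jk)) tlt.
have -> : (fun N => P N [set w | forall j, (1 <= j <= k)%N ->
      (sqsum (fun r => cN (fun i => nu N r i w)) (t j.-1) (t j) <= (K j)%:E)%E]) =
    (fun N => P N (\bigcap_(j < k) [set w | (S N j.+1 w <= (K j.+1)%:E)%E])).
  apply/funext => N; congr (P N _); apply/seteqP; split => w /= Sw.
    by move=> j jk; apply: Sw.
  by case=> [//|j] /= jk; apply: Sw.
apply: probability_bigcap_cvg1 => [|j jk].
  near=> N; have mSN : forall j, measurable_fun setT (S N j) by near: N.
  by move=> j _; rewrite -[X in measurable X]setTI; apply: measurable_lee.
rewrite (_ : (fun N => _) = fun N => P N [set w | ((K j.+1)%:E < S N j.+1 w)%E]).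
  apply: markov_cvg0 (ES j jk).
  - exact: K_pos.
  - by move=> N w; exact: sqsum_ge0.
  - by apply: filterS mS => N /(_ j.+1).
apply/funext => N; congr (P N _).
by apply/seteqP; split => w /=; rewrite ltNge => /negP.
Unshelve. all: end_near.
Qed.
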